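(* Suppose there is a polynomial $p_2$ such that for every $d\ge 2$, every Boolean matrix $M\in\{0,1\}^{n\times m}$ ($n,m\ge1$) of rank at most $d$ contains a submatrix $M|_{S\times T}$ ($S\subseteq[n]$, $T\subseteq[m]$) in which every column is constant and $|S||T|\ge nm\cdot 2^{-p_2(\log d)}$. Then for every integer $k\ge 2$ there is a polynomial $p_k$ such that for every $d\ge 2$, every $k$-listable real matrix $M\in\mathbb R^{n\times m}$ of rank at most $d$ contains a $1$-listable submatrix $M|_{S\times T}$ with $|S||T|\ge nm\cdot 2^{-p_k(\log d)}$.
   Context: A real matrix is $k$-listable if every column contains at most $k$ distinct entries; $1$-listable means every column is constant. For $S\subseteq[n]$, $T\subseteq[m]$, $M|_{S\times T}$ is the submatrix with rows $S$ and columns $T$, of size $|S||T|$. Logarithms are base 2. *)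

From Stdlib Require Import Reals.
From mathcomp Require Import all_boot all_order all_algebra.
From mathcomp Require Import Rstruct.
Set Implicit Arguments. Unset Strict Implicit. Unset Printing Implicit Defensive.

Definition log2 (x : R) : R := (ln x / ln 2)%R.

Definition listable_on (k : nat) (n m : nat) (M : 'M[R]_(n, m))
  (S : {set 'I_n}) (T : {set 'I_m}) : Prop :=
  forall j : 'I_m, j \in T -> size (undup [seq M i j | i <- enum S]) <= k.

Definition listable (k : nat) (n m : nat) (M : 'M[R]_(n, m)) : Prop :=
  listable_on k M setT setT.

Definition boolean_mx (n m : nat) (M : 'M[R]_(n, m)) : Prop :=
  forall i j, M i j = 0%R \/ M i j = 1%R.

(* We prove, by induction on k >= 1, that a polynomial bound q_k exists for
   k-listable real matrices (a 1-listable matrix is its own witness, q_1 = 0).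
   For a (k+1)-listable M of rank <= d, let a_j be one of the values of column
   j and B the 0/1 matrix with B_ij = [M_ij = a_j].  Since column j takes at
   most k other values v, B_ij is the product of k affine functions
   (M_ij - v) / (a_j - v) of M_ij, so rank B <= (d + 1)^k <= d^(2k).  The
   Boolean hypothesis yields a large block S x T on which B is column-constant;
   on the columns where B = 1 the block of M is constant, on the others M
   avoids a_j there and is k-listable.  One of these two halves keeps half of
   the block, and in the second case the induction hypothesis, applied to the
   submatrix of M on the block, finishes the job. *)

From Stdlib Require Import Reals.
From mathcomp Require Import all_boot all_order all_algebra.
From mathcomp Require Import Rstruct.
From mathcomp Require Import zify lra.
Set Implicit Arguments. Unset Strict Implicit. Unset Printing Implicit Defensive.
Import Order.TTheory GRing.Theory Num.Theory.
Local Open Scope ring_scope.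

Section EntrywiseProducts.
Variable F : fieldType.

Lemma mxrank_sum_le (I : finType) p q (A : I -> 'M[F]_(p, q)) :
  (\rank (\sum_(i : I) A i)%R <= \sum_(i : I) \rank (A i))%N.
Proof.
apply: (big_ind2 (fun (B : 'M[F]_(p, q)) k => \rank B <= k)%N) => //.
- by rewrite mxrank0.
- by move=> B1 k1 B2 k2 h1 h2; exact: leq_trans (mxrank_add _ _) (leq_add h1 h2).
Qed.

Lemma mxrank_mxsub m n m' n' (f : 'I_m' -> 'I_m) (g : 'I_n' -> 'I_n)
    (A : 'M[F]_(m, n)) :
  (\rank (mxsub f g A) <= \rank A)%N.
Proof.
rewrite mxsubrc; apply: leq_trans (mxrankS (rowsub_sub _ _)) _.
by rewrite -[A in colsub _ A]mulmx1 -mulmx_colsub mxrankM_maxl.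
Qed.

(* Writing A = C R with C of width r = rank A, each entry a_ij x + b_ij is an
   inner product in F^(1+r); the entrywise product of K such matrices is a sum
   of (1+r)^K rank-one matrices, one for each choice of a coordinate per factor. *)
Lemma mxrank_prod_affine m n K (A : 'M[F]_(m, n)) (al be : 'I_n -> 'I_K -> F) :
  (\rank (\matrix_(i, j) \prod_(s < K) (al j s * A i j + be j s))%R
     <= (\rank A).+1 ^ K)%N.
Proof.
set r := \rank A.
pose u i (o : 'I_1 + 'I_r) : F :=
  if o is inr t then col_base A i t else 1.
pose w j s (o : 'I_1 + 'I_r) : F :=
  if o is inr t then al j s * row_base A t j else be j s.
have affineE i j s : al j s * A i j + be j s = \sum_o u i o * w j s o.
  rewrite big_sumType /= big_ord1 mul1r addrC -{1}(mulmx_base A) mxE mulr_sumr.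
  by congr (_ + _); apply: eq_bigr => t _; rewrite mulrCA.
have -> : \matrix_(i, j) \prod_(s < K) (al j s * A i j + be j s)
   = \sum_(rho : {ffun 'I_K -> 'I_1 + 'I_r})
        (\col_i \prod_(s < K) u i (rho s)) *m (\row_j \prod_(s < K) w j s (rho s)).
  apply/matrixP => i j; rewrite !mxE summxE.
  under eq_bigr do rewrite affineE.
  rewrite bigA_distr_bigA; apply: eq_bigr => rho _.
  by rewrite mxE big_ord1 !mxE -big_split.
apply: leq_trans (mxrank_sum_le _) _.
apply: (@leq_trans (\sum_(rho : {ffun 'I_K -> 'I_1 + 'I_r}) 1)).
  by apply: leq_sum => rho _; exact: leq_trans (mxrankM_maxl _ _) (rank_leq_col _).
by rewrite sum1_card card_ffun card_sum !card_ord.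
Qed.

(* The affine factors x |-> (x - vs_s) / (a - vs_s), one for each value vs_s
   (and the constant 1 beyond size vs), whose product is the indicator of a. *)
Definition indicator_slope (a : F) (vs : seq F) (s : nat) : F :=
  if (s < size vs)%N then (a - vs`_s)^-1 else 0.

Definition indicator_offset (a : F) (vs : seq F) (s : nat) : F :=
  if (s < size vs)%N then - vs`_s * (a - vs`_s)^-1 else 1.

Lemma prod_indicator K (a : F) (vs : seq F) x :
  (size vs <= K)%N -> a \notin vs -> x \in a :: vs ->
  \prod_(s < K) (indicator_slope a vs s * x + indicator_offset a vs s)
    = (x == a)%:R.
Proof.
move=> le_vs_K a_vs; rewrite inE /indicator_slope /indicator_offset.
have factorE s y :
    (a - vs`_s)^-1 * y + - vs`_s * (a - vs`_s)^-1 = (y - vs`_s) / (a - vs`_s).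
  by rewrite mulrC -mulrDl.
case: eqP => [-> _ | ne_xa /= x_vs].
  rewrite big1 // => s _; case: ifP => [s_vs | _]; last by rewrite mul0r add0r.
  rewrite factorE divff // subr_eq0; apply: contraNneq a_vs => ->.
  exact: mem_nth.
have ix_K : (index x vs < K)%N by apply: leq_trans le_vs_K; rewrite index_mem.
rewrite (bigD1 (Ordinal ix_K)) //= index_mem x_vs factorE.
by rewrite nth_index // subrr !mul0r.
Qed.

Lemma mxrank_indicator m n K (A : 'M[F]_(m, n)) (a : 'I_n -> F)
    (vs : 'I_n -> seq F) :
  (forall j, size (vs j) <= K)%N -> (forall j, a j \notin vs j) ->
  (forall i j, A i j \in a j :: vs j) ->
  (\rank (\matrix_(i, j) (A i j == a j)%:R : 'M[F]_(m, n)) <= (\rank A).+1 ^ K)%N.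
Proof.
move=> le_vs_K a_vs A_vals.
pose al j s := indicator_slope (a j) (vs j) s.
pose be j s := indicator_offset (a j) (vs j) s.
have -> : (\matrix_(i, j) (A i j == a j)%:R : 'M[F]_(m, n))
        = \matrix_(i, j) \prod_(s < K) (al j s * A i j + be j s).
  by apply/matrixP => i j; rewrite !mxE prod_indicator.
exact: mxrank_prod_affine.
Qed.

End EntrywiseProducts.

Lemma listable_onP k n m (M : 'M[R]_(n, m)) S T :
  listable_on k M S T <->
  (forall j, j \in T -> exists2 vs : seq R, (size vs <= k)%N &
                           forall i, i \in S -> M i j \in vs).
Proof.
split=> [lM j jT | vals j jT].
  exists (undup [seq M i j | i <- enum S]); first exact: lM.
  by move=> i iS; rewrite mem_undup; apply: map_f; rewrite mem_enum.
have [vs le_vs_k S_vs] := vals j jT; apply: leq_trans le_vs_k.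
apply: leq_trans (size_undup vs); apply: uniq_leq_size (undup_uniq _) _.
by move=> x; rewrite !mem_undup => /mapP[i]; rewrite mem_enum => /S_vs ? ->.
Qed.

Definition submx_on n m (M : 'M[R]_(n, m)) (S : {set 'I_n}) (T : {set 'I_m})
    : 'M[R]_(#|S|, #|T|) :=
  mxsub enum_val enum_val M.

Lemma listable_submx_on k n m (M : 'M[R]_(n, m)) S T :
  listable_on k M S T -> listable k (submx_on M S T).
Proof.
move=> /listable_onP lM; apply/listable_onP => j _.
have [vs le_vs_k S_vs] := lM _ (enum_valP j).
by exists vs => // i _; rewrite mxE S_vs ?enum_valP.
Qed.

Lemma listable_on_lift k n m (M : 'M[R]_(n, m)) S0 T0 S T :
  listable_on k (submx_on M S0 T0) S T ->
  listable_on k M (enum_val @: S) (enum_val @: T).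
Proof.
move=> /listable_onP lN; apply/listable_onP => _ /imsetP[j jT ->].
have [vs le_vs_k S_vs] := lN j jT.
by exists vs => // _ /imsetP[i iS ->]; have := S_vs i iS; rewrite mxE.
Qed.

Lemma mem_size_le1 (T : eqType) (s : seq T) x y :
  (size s <= 1)%N -> x \in s -> y \in s -> x = y.
Proof. by case: s => [|z [|]] //= _; rewrite !inE => /eqP -> /eqP ->. Qed.

Lemma listable_head_split k n m (M : 'M[R]_(n, m)) :
  listable k.+1 M ->
  exists (a : 'I_m -> R) (vs : 'I_m -> seq R),
    [/\ forall j, (size (vs j) <= k)%N, forall j, a j \notin vs j
      & forall i j, M i j \in a j :: vs j].
Proof.
move=> lM; pose vals j := undup [seq M i j | i <- enum [set: 'I_n]].
exists (fun j => head 0 (vals j)), (fun j => behead (vals j)); split.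
- move=> j; rewrite size_behead -subn1 leq_subLR add1n.
  exact: (lM j (in_setT j)).
- move=> j; have := undup_uniq [seq M i j | i <- enum [set: 'I_n]].
  by rewrite -/(vals j); case: (vals j) => //= x t /andP[].
- move=> i j; have : M i j \in vals j.
    by rewrite mem_undup; apply: map_f; rewrite mem_enum inE.
  by case: (vals j).
Qed.

Lemma indicator_block_split k n m (M : 'M[R]_(n, m)) (a : 'I_m -> R)
    (vs : 'I_m -> seq R) S T :
  (forall j, size (vs j) <= k)%N -> (forall i j, M i j \in a j :: vs j) ->
  listable_on 1 (\matrix_(i, j) (M i j == a j)%:R) S T ->
  let A := [set j | [forall i in S, M i j == a j]] in
  listable_on 1 M S (T :&: A) /\ listable_on k M S (T :\: A).
Proof.
move=> le_vs_k M_vals /listable_onP lB A; split; apply/listable_onP => j.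
  rewrite !inE => /andP[_ /forall_inP Sa].
  by exists [:: a j] => // i /Sa; rewrite inE.
rewrite !inE => /andP[/forall_inPn[i1 i1S ne_i1] jT].
exists (vs j) => // i iS; have [bs le_bs_1 S_bs] := lB j jT.
have := mem_size_le1 le_bs_1 (S_bs i iS) (S_bs i1 i1S); rewrite !mxE.
have := M_vals i j; rewrite inE (negPf ne_i1) => /orP[/eqP -> | //].
by rewrite eqxx => /eqP; rewrite pnatr_eq0.
Qed.

Lemma Rpower2_gt0 x : 0 < Rpower 2 x.
Proof. by apply/RltP; exact: exp_pos. Qed.

Lemma Rpower2_le x y : x <= y -> Rpower 2 x <= Rpower 2 y.
Proof. by move=> /RleP le_xy; apply/RleP; apply: Rle_Rpower => //; exact: IZR_le. Qed.

Lemma Rpower2_N1 : Rpower 2 (- 1) = 2^-1.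
Proof. by rewrite (Rpower_Ropp 2 1) Rpower_1 ?RinvE //; exact: Rlt_0_2. Qed.

Definition large_frac (a b : nat) (x : R) : bool :=
  INR a >= INR b * Rpower 2 (- x).
Arguments large_frac a b x%_ring_scope.

Lemma large_frac_trans a b c x y :
  large_frac a b x -> large_frac b c y -> large_frac a c (x + y).
Proof.
rewrite /large_frac Ropp_plus_distr Rpower_plus !RmultE => le_ab le_bc.
apply: le_trans le_ab; rewrite mulrA mulrAC ler_wpM2r //.
exact/ltW/Rpower2_gt0.
Qed.

Lemma large_frac_weaken a b x y :
  x <= y -> large_frac a b x -> large_frac a b y.
Proof.
rewrite /large_frac => le_xy; apply: le_trans; rewrite ler_wpM2l ?INRE ?ler0n //.
by apply: Rpower2_le; rewrite !RoppE lerN2.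
Qed.

Lemma large_frac_half a b : (b <= 2 * a)%N -> large_frac a b 1.
Proof.
rewrite /large_frac Rpower2_N1 !INRE => le_b_2a.
rewrite ler_pdivrMr ?ltr0n // mulrC -natrM ler_nat; lia.
Qed.

Lemma large_frac_gt0 a b x : (0 < b)%N -> large_frac a b x -> (0 < a)%N.
Proof.
rewrite /large_frac !INRE -(ltr0n R) => b_gt0 le_ab; rewrite -(ltr0n R).
by apply: lt_le_trans le_ab; rewrite mulr_gt0 ?Rpower2_gt0.
Qed.

(* log2 (d^e) = e log2 d: rank bounds d^e become rescaled polynomial bounds. *)
Lemma log2_expn d e : (0 < d)%N -> log2 (INR (d ^ e)) = INR e * log2 (INR d).
Proof.
move=> d_gt0; have -> : INR (d ^ e) = pow (INR d) e by rewrite !INRE natrX RpowE.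
rewrite /log2 ln_pow ?RmultE ?mulrA //.
by apply/RltP; rewrite INRE ltr0n.
Qed.

Lemma large_frac_refl a : large_frac a a 0.
Proof. by rewrite /large_frac Ropp_0 Rpower_O ?mulr1 //; exact: Rlt_0_2. Qed.

Lemma card_halves (T : finType) (B A : {set T}) :
  (#|B| <= 2 * #|B :&: A|)%N \/ (#|B| <= 2 * #|B :\: A|)%N.
Proof. by have := cardsID A B; lia. Qed.

Definition boolean_density (p : {poly R}) : Prop :=
  forall d : nat, (2 <= d)%N ->
  forall (n m : nat), (0 < n)%N -> (0 < m)%N ->
  forall M : 'M[R]_(n, m), boolean_mx M -> (\rank M <= d)%N ->
  exists (S : {set 'I_n}) (T : {set 'I_m}),
    listable_on 1 M S T /\ large_frac (#|S| * #|T|) (n * m) p.[log2 (INR d)].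

Definition listable_density (k : nat) (p : {poly R}) : Prop :=
  forall d : nat, (2 <= d)%N ->
  forall (n m : nat), (0 < n)%N -> (0 < m)%N ->
  forall M : 'M[R]_(n, m), listable k M -> (\rank M <= d)%N ->
  exists (S : {set 'I_n}) (T : {set 'I_m}),
    listable_on 1 M S T /\ large_frac (#|S| * #|T|) (n * m) p.[log2 (INR d)].

Lemma listable_density_base : listable_density 1 0.
Proof.
move=> d _ n m _ _ M lM _; exists setT, setT; split=> //.
by rewrite !cardsT !card_ord horner0; exact: large_frac_refl.
Qed.

Lemma listable_density_on k q d n m (M : 'M[R]_(n, m))
    (S0 : {set 'I_n}) (T0 : {set 'I_m}) :
  listable_density k q -> (2 <= d)%N -> (\rank M <= d)%N ->
  (0 < #|S0|)%N -> (0 < #|T0|)%N -> listable_on k M S0 T0 ->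
  exists (S : {set 'I_n}) (T : {set 'I_m}),
    listable_on 1 M S T /\
    large_frac (#|S| * #|T|) (#|S0| * #|T0|) q.[log2 (INR d)].
Proof.
move=> Hq le2d rkM S0_gt0 T0_gt0 lM.
have rkN : (\rank (submx_on M S0 T0) <= d)%N.
  exact: leq_trans (mxrank_mxsub _ _ _) rkM.
have [S [T [lN fracN]]] := Hq d le2d _ _ S0_gt0 T0_gt0 _ (listable_submx_on lM) rkN.
exists (enum_val @: S), (enum_val @: T); split; first exact: listable_on_lift lN.
by rewrite !card_imset //; exact: enum_val_inj.
Qed.

(* The bound for (k+2)-listable matrices built from the one for (k+1): the
   Boolean bound at rank d^(2(k+1)), squared to absorb its sign, plus the loss
   of one halving and the bound q of the induction hypothesis. *)
Definition next_bound (p2 : {poly R}) (k : nat) (q : {poly R}) : {poly R} :=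
  let h := p2 \Po (INR (2 * k.+1) *: 'X) in h * h + 2%:P + q.

Lemma next_boundE p2 k q x :
  (next_bound p2 k q).[x] =
    p2.[INR (2 * k.+1) * x] * p2.[INR (2 * k.+1) * x] + 2 + q.[x].
Proof. by rewrite /next_bound !hornerE horner_comp hornerZ hornerX. Qed.

Lemma listable_density_step p2 k q :
  boolean_density p2 -> (forall x, 0 <= q.[x]) -> listable_density k.+1 q ->
  listable_density k.+2 (next_bound p2 k q).
Proof.
move=> Hp2 q_ge0 Hq d le2d n m n_gt0 m_gt0 M lM rkM.
have [a [vs [le_vs a_vs M_vals]]] := listable_head_split lM.
pose B : 'M[R]_(n, m) := \matrix_(i, j) (M i j == a j)%:R.
have B_bool : boolean_mx B by move=> i j; rewrite mxE; case: eqP; [right | left].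
have le2d' : (2 <= d ^ (2 * k.+1))%N.
  by apply: (leq_trans le2d); rewrite -{1}(expn1 d) leq_pexp2l //; lia.
have rkB : (\rank B <= d ^ (2 * k.+1))%N.
  apply: leq_trans (mxrank_indicator le_vs a_vs M_vals) _.
  rewrite expnM leq_exp2r // (@leq_trans d.+1) ?ltnS //; nia.
have [S [T [lB fracB]]] := Hp2 _ le2d' n m n_gt0 m_gt0 B B_bool rkB.
rewrite log2_expn 1?ltnW // in fracB.
have [lMa lMb] := indicator_block_split le_vs M_vals lB.
set A := [set j | _] in lMa lMb.
set L := log2 (INR d); set u := p2.[_ * L] in fracB.
have next_ge : u + 1 + q.[L] <= (next_bound p2 k q).[L].
  by rewrite next_boundE -/u; have := q_ge0 L; nra.
have [halfA | halfD] := card_halves T A.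
  exists S, (T :&: A); split => //; apply: (large_frac_weaken next_ge).
  apply: (large_frac_weaken _ (large_frac_trans (large_frac_half _) fracB)).
    by have := q_ge0 L; lra.
  by rewrite mulnCA leq_mul2l halfA orbT.
have nm_gt0 : (0 < n * m)%N by rewrite muln_gt0 n_gt0.
have ST_gt0 := large_frac_gt0 nm_gt0 fracB.
have [S_gt0 TD_gt0] : (0 < #|S|)%N /\ (0 < #|T :\: A|)%N.
  by move: ST_gt0; rewrite muln_gt0 => /andP[]; lia.
have [S' [T' [lM' fracM']]] := listable_density_on Hq le2d rkM S_gt0 TD_gt0 lMb.
exists S', T'; split => //; apply: (large_frac_weaken next_ge).
apply: (large_frac_weaken _
  (large_frac_trans (large_frac_trans fracM' (large_frac_half _)) fracB)).
  lra.
by rewrite mulnCA leq_mul2l halfD orbT.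
Qed.

Lemma listable_density_all p2 : boolean_density p2 ->
  forall k, exists q : {poly R}, (forall x, 0 <= q.[x]) /\ listable_density k.+1 q.
Proof.
move=> Hp2; elim=> [|k [q [q_ge0 Hq]]].
  by exists 0; split; [move=> x; rewrite horner0 | exact: listable_density_base].
exists (next_bound p2 k q); split; last exact: listable_density_step.
by move=> x; rewrite next_boundE; have := q_ge0 x; nra.
Qed.

Theorem theorem2p10 :
  (exists p2 : {poly R},
     forall d : nat, (2 <= d)%N ->
     forall (n m : nat), (0 < n)%N -> (0 < m)%N ->
     forall M : 'M[R]_(n, m),
       boolean_mx M -> (\rank M <= d)%N ->
       exists (S : {set 'I_n}) (T : {set 'I_m}),
         listable_on 1 M S T /\
         (INR (#|S| * #|T|) >= INR (n * m) * Rpower 2 (- p2.[log2 (INR d)]%R))%R) ->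
  forall k : nat, (2 <= k)%N ->
  exists pk : {poly R},
     forall d : nat, (2 <= d)%N ->
     forall (n m : nat), (0 < n)%N -> (0 < m)%N ->
     forall M : 'M[R]_(n, m),
       listable k M -> (\rank M <= d)%N ->
       exists (S : {set 'I_n}) (T : {set 'I_m}),
         listable_on 1 M S T /\
         (INR (#|S| * #|T|) >= INR (n * m) * Rpower 2 (- pk.[log2 (INR d)]%R))%R.
Proof.
move=> [p2 Hp2] k le2k.
have [q [_ Hq]] := listable_density_all Hp2 k.-1.
by rewrite (prednK (ltnW le2k)) in Hq; exists q.
Qed.
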